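(* Let $G_1=(V_1,E_1)$ and $G_2=(V_2,E_2)$ be finite simple graphs with $G_1$ a minor of $G_2$, obtained from $G_2$ by deleting the edge set $E_2^d$ and contracting the edge set $E_2^c$ as described in the context. Let $A$ be an incidence matrix on $\mathcal D(G_2)$ such that $A_{d_1,d_2}=0$ whenever $d_1$ or $d_2$ is a dart $(v,e)$ with $e\in E_2^d$. Let $K$ be the set of darts $(v,e)\in V_{\mathcal D}(G_2)$ with $e\in E_2^c\cup E_2^d$ and $\bar K=V_{\mathcal D}(G_2)\setminus K$. Then $\bar K$ can be identified with $V_{\mathcal D}(G_1)$ (via $(x,e)\mapsto$ (image of $x$, image of $e$)), and the antisymmetric matrix $A^{\bar K}$ indexed by $\bar K$ with entries $(A^{\bar K})_{i,j}=-(A^{\bar K})_{j,i}=\operatorname{Pf}(A_{K\cup\{i,j\}})$ for $i<j$ in $\bar K$ is an incidence matrix on $\mathcal D(G_1)$.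
   Context: The dart graph $\mathcal D(G)$ of $G=(V,E)$ has vertex set $V_{\mathcal D}(G)=\{(v,e)\in V\times E: v\text{ incident with }e\}$, two distinct darts $(v,e),(v',e')$ being adjacent iff $v=v'$ or $e=e'$. Fix a total order on $V_{\mathcal D}(G_2)$; subsets of indices carry the induced order. An incidence matrix on $\mathcal D(G)$ is an antisymmetric complex matrix indexed by $V_{\mathcal D}(G)$ with $A_{d,d'}=0$ whenever $\{d,d'\}$ is not an edge of $\mathcal D(G)$. For a set of indices $L$, $A_L=(A_{i,j})_{i,j\in L}$ is the principal submatrix, and $\operatorname{Pf}$ is the Pfaffian. Minor transformation: $E_2^d,E_2^c\subseteq E_2$ are disjoint, $(V_2,E_2^c)$ contains no cycle, each connected component of $(V_2,E_2^c)$ is contracted to a single vertex of $G_1$ (a surjection $V_2\to V_1$), and the edges of $E_2\setminus(E_2^c\cup E_2^d)$ correspond bijectively to $E_1$, an edge $\{x,y\}$ corresponding to the edge of $G_1$ joining the images of $x$ and $y$. *)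

From HB Require Import structures.
From mathcomp Require Import all_boot all_order fingroup perm all_algebra.
From mathcomp Require Import complex.
Set Implicit Arguments. Unset Strict Implicit. Unset Printing Implicit Defensive.
Import GRing.Theory.
Local Open Scope ring_scope.

Definition simple_graph (V : finType) (E : {set {set V}}) : Prop :=
  forall e, e \in E -> #|e| = 2%N.

Definition adjE (V : finType) (E : {set {set V}}) : rel V :=
  fun x y => [set x; y] \in E.

Definition acyclic (V : finType) (E : {set {set V}}) : Prop :=
  ~ exists s : seq V, [/\ (3 <= size s)%N, uniq s & path.cycle (adjE E) s].

Definition darts (V : finType) (E : {set {set V}}) : {set V * {set V}} :=
  [set d | (d.2 \in E) && (d.1 \in d.2)].

Definition dart_adj (V : finType) (d d' : V * {set V}) : bool :=
  (d != d') && ((d.1 == d'.1) || (d.2 == d'.2)).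

Definition incidence_matrix (C : pzRingType) (V : finType) (E : {set {set V}})
    (A : V * {set V} -> V * {set V} -> C) : Prop :=
  (forall d d', d \in darts E -> d' \in darts E -> A d d' = - A d' d) /\
  (forall d d', d \in darts E -> d' \in darts E -> ~~ dart_adj d d' -> A d d' = 0).

Definition vimg (V1 V2 : finType) (pi : V2 -> V1) (e : {set V2}) : {set V1} :=
  [set pi x | x in e].

(* G1 = (V1,E1) is obtained from G2 = (V2,E2) by deleting E2d and
   contracting E2c, with pi : V2 -> V1 the contraction map. *)
Definition minor_transf (V1 V2 : finType) (E1 : {set {set V1}})
    (E2 : {set {set V2}}) (E2d E2c : {set {set V2}}) (pi : V2 -> V1) : Prop :=
  [/\ E2d \subset E2, E2c \subset E2, [disjoint E2d & E2c] & acyclic E2c] /\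
  (forall y : V1, exists x : V2, pi x = y) /\
  (forall x y : V2, (pi x == pi y) = connect (adjE E2c) x y) /\
  {in E2 :\: (E2c :|: E2d) &, injective (vimg pi)} /\
  [set vimg pi e | e in E2 :\: (E2c :|: E2d)] = E1.

Definition total_order (T : Type) (le : rel T) : Prop :=
  [/\ total le, transitive le & antisymmetric le].

(* Pfaffian of a k x k matrix:
   Pf(M) = 1/(2^m m!) sum_{s in S_k} sgn(s) prod_{i<m} M_{s(2i), s(2i+1)}
   for k = 2m, and 0 for k odd.  Here the product runs over the even
   indices i = 2j (0-based), and ordS i = i + 1 (< k since k is even). *)
Definition pf (F : fieldType) (k : nat) (M : 'M[F]_k) : F :=
  if odd k then 0 else
  ((2 ^ k./2 * (k./2)`!)%N%:R)^-1 *
  \sum_(s : 'S_k) (-1) ^+ s *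
     \prod_(i < k | ~~ odd i) M (s i) (s (ordS i)).

Definition pf_sub (F : fieldType) (T : finType) (le : rel T)
    (A : T -> T -> F) (L : {set T}) : F :=
  let s := in_tuple (sort le (enum L)) in
  pf (\matrix_(i, j) A (tnth s i) (tnth s j)).

Definition schur_pf (F : fieldType) (T : finType) (le : rel T)
    (A : T -> T -> F) (K : {set T}) (i j : T) : F :=
  if (i != j) && le i j then pf_sub le A (K :|: [set i; j])
  else if (i != j) && le j i then - pf_sub le A (K :|: [set i; j])
  else 0.

Definition dart_map (V1 V2 : finType) (pi : V2 -> V1) (d : V2 * {set V2}) :
  V1 * {set V1} := (pi d.1, vimg pi d.2).

(* For darts d, d' of G2 whose images in G1 are non-adjacent, the Pfaffian of
   A restricted to K + {d, d'} vanishes.  Let P be the non-deleted darts of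
   K + {d, d'} lying over the vertex of G1 under d.  Apart from d itself they
   sit on contracted edges and come in pairs (v, f), (w, f), so #|P| is odd.
   A vanishes between P and the other darts: deleted darts carry zero rows,
   and any other dart lies over a different vertex of G1, so it shares neither
   a vertex nor (since contracted edges join identified vertices) an edge with
   a dart of P.  A Pfaffian with an isolated block of odd size is zero, since
   each of its terms pairs the indices off. *)

From mathcomp Require Import all_boot fingroup perm all_algebra.
From mathcomp Require Import complex.
Set Implicit Arguments. Unset Strict Implicit. Unset Printing Implicit Defensive.
Import GRing.Theory.
Local Open Scope ring_scope.

Lemma fixfree_involution_even_card (T : finType) (f : T -> T) (X : {set T}) :
  (forall x, x \in X -> [/\ f x \in X, f (f x) = x & f x != x]) -> ~~ odd #|X|.
Proof.
have [n] := ubnP #|X|; elim: n X => // n IH X leX hX.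
have [->|[x xX]] := set_0Vmem X; first by rewrite cards0.
have [fxX ffx fxx] := hX x xX.
set Y := X :\: [set x; f x].
have cardX : #|X| = (#|Y|.+2)%N.
  rewrite -(cardsID [set x; f x] X) (setIidPr _) ?cards2 1?eq_sym ?fxx //.
  by apply/subsetP => y; rewrite !inE => /orP[]/eqP->.
rewrite cardX /= negbK; apply: IH; first by move: leX; rewrite cardX ltnS => /ltnW.
move=> y; rewrite !inE => /andP[/norP[yx yfx] yX].
have [fyX ffy fyy] := hX y yX.
split => //; rewrite fyX andbT; apply/norP; split.
  by apply: contra yfx => /eqP <-; rewrite ffy.
by apply: contra yx => /eqP fyfx; rewrite -ffy fyfx ffx.
Qed.

Lemma odd_ordS k (i : 'I_k) : ~~ odd k -> odd (ordS i) = ~~ odd i.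
Proof.
move=> evk; rewrite /=; case: (ltngtP i.+1 k) => [ltik|gtik|eqik].
- by rewrite modn_small.
- by move: (ltn_ord i); rewrite ltnNge -ltnS gtik.
- by rewrite eqik modnn -[~~ odd i]/(odd i.+1) eqik (negbTE evk).
Qed.

Lemma odd_ord_pred k (i : 'I_k) : ~~ odd k -> odd (ord_pred i) = ~~ odd i.
Proof. by move=> evk; rewrite -[in RHS](ord_predK i) odd_ordS // negbK. Qed.

Definition ord_partner k (i : 'I_k) := if odd i then ord_pred i else ordS i.

Lemma ord_partnerK k (i : 'I_k) : ~~ odd k ->
  ord_partner (ord_partner i) = i /\ ord_partner i != i.
Proof.
move=> evk; rewrite /ord_partner; have [oi|ei] := boolP (odd i).
  rewrite odd_ord_pred // oi /= ord_predK; split=> //.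
  by apply: (contraTneq _ oi) => e; rewrite -{1}e odd_ord_pred // oi.
rewrite odd_ordS // ei /= ordSK; split=> //.
by apply: (contraNneq _ ei) => e; rewrite -{1}e odd_ordS // ei.
Qed.

Lemma pf_eq0_odd_block (F : fieldType) k (M : 'M[F]_k) (P : {set 'I_k}) :
  odd #|P| -> (forall i j, i \in P -> j \notin P -> M i j = 0 /\ M j i = 0) ->
  pf M = 0.
Proof.
move=> oddP blockM; rewrite /pf; case: ifPn => // evk.
rewrite big1 ?mulr0 // => s _; set Q := s @^-1: P.
have [/existsP[i /andP[evi iQ]]|/existsPn closedQ] :=
  boolP [exists i : 'I_k, ~~ odd i && ((i \in Q) != (ordS i \in Q))].
  apply/eqP; rewrite mulf_eq0; apply/orP; right; apply/prodf_eq0.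
  exists i => //; move: iQ; rewrite !inE.
  case: (boolP (s i \in P)) => [inP|outP];
    case: (boolP (s (ordS i) \in P)) => [inP'|outP'] //= _.
    by have [-> _] := blockM _ _ inP outP'.
  by have [_ ->] := blockM _ _ inP' outP.
have partnerQ i : (ord_partner i \in Q) = (i \in Q).
  have closedQ' (j : 'I_k) : ~~ odd j -> (ordS j \in Q) = (j \in Q).
    by move=> evj; have := closedQ j; rewrite evj /= negbK => /eqP.
  rewrite /ord_partner; case: ifP => oi; last by rewrite closedQ' ?oi.
  by rewrite -[in RHS](ord_predK i) closedQ' ?odd_ord_pred ?oi.
have : ~~ odd #|Q|.
  apply: (@fixfree_involution_even_card _ (@ord_partner k)) => i iQ.
  by have [? ?] := ord_partnerK i evk; rewrite partnerQ.
by rewrite card_preimset ?oddP //; exact: perm_inj.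
Qed.

Lemma pf_sub_eq0_odd_block (F : fieldType) (T : finType) (le : rel T)
    (A : T -> T -> F) (L P : {set T}) :
  P \subset L -> odd #|P| ->
  (forall a b, a \in P -> b \in L :\: P -> A a b = 0 /\ A b a = 0) ->
  pf_sub le A L = 0.
Proof.
move=> PL oddP blockA; rewrite /pf_sub; set s := in_tuple _.
have uniq_s : uniq s by rewrite sort_uniq enum_uniq.
have mem_s y : (y \in s) = (y \in L) by rewrite mem_sort mem_enum.
set Q := [set i | tnth s i \in P].
have imQ : tnth s @: Q = P.
  apply/setP=> y; apply/imsetP/idP => [[i iQ ->] | yP]; first by rewrite inE in iQ.
  have /tnthP[i yi] : y \in s by rewrite mem_s (subsetP PL).
  by exists i; rewrite // inE -yi.
apply: (@pf_eq0_odd_block _ _ _ Q) => [|i j iQ jQ].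
  by rewrite -(card_imset _ (tuple_uniqP _ uniq_s)) imQ.
move: iQ jQ; rewrite !inE !mxE => iP jP.
by apply: blockA; rewrite // inE jP -mem_s mem_tnth.
Qed.

Lemma schur_pfN (F : fieldType) (T : finType) (le : rel T) (A : T -> T -> F)
    (K : {set T}) i j :
  total le -> antisymmetric le -> schur_pf le A K i j = - schur_pf le A K j i.
Proof.
move=> le_total le_anti; rewrite /schur_pf [[set j; i]]setUC eq_sym.
have [->|ij] /= := eqVneq i j; first by rewrite oppr0.
case: (boolP (le i j)) => lij; case: (boolP (le j i)) => lji //=.
- by move: ij; rewrite (le_anti i j) ?lij ?lji ?eqxx.
- by rewrite opprK.
- by have := le_total i j; rewrite (negbTE lij) (negbTE lji).
Qed.

Lemma set2_of_card2 (T : finType) (e : {set T}) x y :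
  #|e| = 2 -> x \in e -> y \in e -> x != y -> e = [set x; y].
Proof.
move=> card_e xe ye xy; apply/eqP; rewrite eq_sym eqEcard cards2 xy card_e andbT.
by apply/subsetP => z; rewrite !inE => /orP[]/eqP->.
Qed.

Definition other_end (T : finType) (e : {set T}) (x : T) := odflt x [pick y in e :\ x].

Lemma other_endP (T : finType) (e : {set T}) x : #|e| = 2 -> x \in e ->
  other_end e x \in e /\ other_end e x != x.
Proof.
move=> card_e xe; rewrite /other_end; case: pickP => [y|none].
  by rewrite !inE => /andP[-> ->].
by move: (cardsD1 x e); rewrite xe card_e (eq_card0 none).
Qed.

Lemma other_endK (T : finType) (e : {set T}) x : #|e| = 2 -> x \in e ->
  other_end e (other_end e x) = x.
Proof.
move=> card_e xe; have [ye yx] := other_endP card_e xe.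
have [ze zy] := other_endP card_e ye.
set y := other_end e x in ye yx ze zy *; set z := other_end e y in ze zy *.
have e_xy : e = [set x; y] by apply: set2_of_card2; rewrite // eq_sym.
by move: ze; rewrite e_xy => /set2P[|/eqP]; last rewrite (negbTE zy).
Qed.

Lemma dart_adj_sym (V : finType) (a b : V * {set V}) : dart_adj a b = dart_adj b a.
Proof. by rewrite /dart_adj eq_sym (eq_sym a.1) (eq_sym a.2). Qed.

Section MinorDarts.

Variables (V1 V2 : finType) (E1 : {set {set V1}}) (E2 E2d E2c : {set {set V2}}).
Variable pi : V2 -> V1.
Hypotheses (simple1 : simple_graph E1) (simple2 : simple_graph E2).
Hypothesis deleted_contracted_disjoint : [disjoint E2d & E2c].
Hypothesis pi_connect : forall x y, (pi x == pi y) = connect (adjE E2c) x y.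
Hypothesis vimg_inj : {in E2 :\: (E2c :|: E2d) &, injective (vimg pi)}.
Hypothesis vimg_E1 : [set vimg pi e | e in E2 :\: (E2c :|: E2d)] = E1.

Local Notation K := [set d in darts E2 | d.2 \in E2c :|: E2d].
Local Notation Kbar := (darts E2 :\: K).

Lemma contracted_edge_pi f v w :
  f \in E2 -> f \in E2c -> v \in f -> w \in f -> pi v = pi w.
Proof.
move=> fE fc vf wf; have [<-//|vw] := eqVneq v w.
apply/eqP; rewrite pi_connect; apply: connect1.
by rewrite /adjE -(set2_of_card2 (simple2 fE) vf wf vw).
Qed.

Lemma mem_Kbar k : (k \in Kbar) = (k.2 \in E2 :\: (E2c :|: E2d)) && (k.1 \in k.2).
Proof.
rewrite !inE.
by case: (k.2 \in E2); case: (k.1 \in k.2); case: (k.2 \in E2c); case: (k.2 \in E2d).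
Qed.

Lemma vimg_set2 (x y : V2) : vimg pi [set x; y] = [set pi x; pi y].
Proof. by rewrite /vimg imsetU1 imset_set1. Qed.

Lemma dart_map_inj : {in Kbar &, injective (dart_map pi)}.
Proof.
move=> [x e] [y f]; rewrite !mem_Kbar /= => /andP[eE xe] /andP[fE yf] [pxy vimg_ef].
have e_f : e = f by apply: vimg_inj.
subst f; have [->//|xy] := eqVneq x y; exfalso.
have eE2 : e \in E2 by case/setDP: eE.
have /simple1 : vimg pi e \in E1 by rewrite -vimg_E1 imset_f.
by rewrite (set2_of_card2 (simple2 eE2) xe yf xy) vimg_set2 pxy setUid cards1.
Qed.

Lemma dart_map_Kbar : dart_map pi @: Kbar = darts E1.
Proof.
apply/setP => [[y f]]; apply/imsetP/idP => [[[x e]] | ].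
  rewrite mem_Kbar /= => /andP[eE xe] [-> ->].
  by rewrite inE /= -vimg_E1 !imset_f.
rewrite inE /= -vimg_E1 => /andP[/imsetP[e eE ->] /imsetP[x xe ->]].
by exists (x, e); rewrite ?mem_Kbar ?eE.
Qed.

Lemma contracted_cluster_even (y : V1) :
  ~~ odd #|[set k in darts E2 | (k.2 \in E2c) && (pi k.1 == y)]|.
Proof.
apply: (@fixfree_involution_even_card _ (fun k => (other_end k.2 k.1, k.2))).
move=> [v f]; rewrite !inE /= => /andP[/andP[fE vf] /andP[fc /eqP <-]].
have [wf wv] := other_endP (simple2 fE) vf.
rewrite fE wf fc (contracted_edge_pi fE fc vf wf) eqxx other_endK ?simple2 //.
by split=> //; apply: contra wv => /eqP[->].
Qed.

Section ClusterPfaffian.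

Variables (F : fieldType) (le : rel (V2 * {set V2})).
Variable A : V2 * {set V2} -> V2 * {set V2} -> F.
Hypothesis A_nonadj : forall d d', d \in darts E2 -> d' \in darts E2 ->
  ~~ dart_adj d d' -> A d d' = 0.
Hypothesis A_deleted : forall d d', d \in darts E2 -> d' \in darts E2 ->
  (d.2 \in E2d) || (d'.2 \in E2d) -> A d d' = 0.

Section Cluster.

Variables d d' : V2 * {set V2}.
Hypotheses (dKbar : d \in Kbar) (d'Kbar : d' \in Kbar).
Hypotheses (pi_neq : pi d.1 != pi d'.1) (edge_neq : d.2 != d'.2).

Local Notation L := (K :|: [set d; d']).
Local Notation P := [set k in L | (k.2 \notin E2d) && (pi k.1 == pi d.1)].

Lemma L_darts k : k \in L -> k \in darts E2.
Proof.
case/setUP => [/setIdP[] //|/set2P[]->].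
  by case/setDP: dKbar.
by case/setDP: d'Kbar.
Qed.

Lemma same_edge_pi a b : a \in L -> b \in L -> a.2 = b.2 -> a.2 \notin E2d ->
  pi a.1 = pi b.1.
Proof.
move=> aL bL ab ad.
have [ac|anc] := boolP (a.2 \in E2c).
  have /setIdP[aE aa] := L_darts aL; have /setIdP[_ bb] := L_darts bL.
  by apply: contracted_edge_pi aE ac aa _; rewrite ab.
have notK k : k \in L -> k.2 = a.2 -> k \in [set d; d'].
  move=> kL ka; case/setUP: kL => // /setIdP[_].
  by rewrite ka inE (negbTE anc) (negbTE ad).
have /set2P aS := notK a aL erefl; have /set2P bS := notK b bL (esym ab).
by move: ab; case: aS => ->; case: bS => -> // de; move: edge_neq; rewrite de eqxx.
Qed.

Lemma odd_cluster : odd #|P|.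
Proof.
have := dKbar; rewrite mem_Kbar !inE negb_or => /andP[/andP[/andP[dc dd] _] _].
have := d'Kbar; rewrite mem_Kbar !inE negb_or => /andP[/andP[/andP[d'c _] _] _].
set C := [set k in darts E2 | (k.2 \in E2c) && (pi k.1 == pi d.1)].
have -> : P = d |: C.
  apply/setP => k; rewrite !inE.
  have [->|kd] /= := eqVneq k d; first by rewrite orbT dd eqxx.
  have [->|kd'] /= := eqVneq k d'.
    by rewrite (negbTE d'c) eq_sym (negbTE pi_neq) !andbF.
  rewrite orbF; have [kc|kc] /= := boolP (k.2 \in E2c); last first.
    by case: (k.2 \in E2d); rewrite /= ?andbF.
  by rewrite (disjointFl deleted_contracted_disjoint kc) andbT.
have dC : d \notin C by rewrite inE (negbTE dc) andbF.
by rewrite cardsU1 dC add1n /=; apply: contracted_cluster_even.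
Qed.

Lemma cluster_isolated a b : a \in P -> b \in L :\: P -> A a b = 0 /\ A b a = 0.
Proof.
move=> /setIdP[aL /andP[ad /eqP pa]] /setDP[bL bP].
have [aD bD] := (L_darts aL, L_darts bL).
have [bd|bnd] := boolP (b.2 \in E2d).
  by split; apply: A_deleted; rewrite // bd ?orbT.
have pb : pi b.1 != pi d.1 by apply: contra bP => pb; rewrite inE bL bnd pb.
have nab : ~~ dart_adj a b.
  rewrite /dart_adj negb_and negb_or; apply/orP; right; apply/andP; split.
    by apply: contra pb => /eqP <-; rewrite pa.
  by apply: contra pb => /eqP ab; rewrite -(same_edge_pi aL bL ab ad) pa.
by split; apply: A_nonadj; rewrite // dart_adj_sym.
Qed.

Lemma pf_sub_cluster_eq0 : pf_sub le A L = 0.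
Proof.
apply: (pf_sub_eq0_odd_block le _ odd_cluster cluster_isolated).
by apply/subsetP => k /setIdP[].
Qed.

End Cluster.

Lemma schur_pf_nonadjacent d d' : d \in Kbar -> d' \in Kbar ->
  ~~ dart_adj (dart_map pi d) (dart_map pi d') -> schur_pf le A K d d' = 0.
Proof.
move=> dK d'K; have [<-|dd'] := eqVneq d d'; first by rewrite /schur_pf eqxx.
rewrite /dart_adj (inj_in_eq dart_map_inj dK d'K) dd' /= negb_or.
case/andP => pi_neq vimg_neq.
have edge_neq : d.2 != d'.2 by apply: contraNneq vimg_neq => ->.
rewrite /schur_pf (pf_sub_cluster_eq0 dK d'K pi_neq edge_neq) oppr0.
by do !case: ifP.
Qed.

End ClusterPfaffian.
End MinorDarts.

Theorem proposition2p13 (R : rcfType) (V1 V2 : finType)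
  (E1 : {set {set V1}}) (E2 : {set {set V2}})
  (hG1 : simple_graph E1) (hG2 : simple_graph E2)
  (E2d E2c : {set {set V2}}) (pi : V2 -> V1)
  (hminor : minor_transf E1 E2 E2d E2c pi)
  (le : rel (V2 * {set V2})) (hle : total_order le)
  (A : V2 * {set V2} -> V2 * {set V2} -> R[i])
  (hA : incidence_matrix E2 A)
  (hAd : forall d1 d2, d1 \in darts E2 -> d2 \in darts E2 ->
           (d1.2 \in E2d) || (d2.2 \in E2d) -> A d1 d2 = 0) :
  let K := [set d in darts E2 | d.2 \in E2c :|: E2d] in
  let Kbar := darts E2 :\: K in
  let AK := schur_pf le A K in
  ({in Kbar &, injective (dart_map pi)} /\ dart_map pi @: Kbar = darts E1) /\
  ((forall d d', d \in Kbar -> d' \in Kbar -> AK d d' = - AK d' d) /\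
   (forall d d', d \in Kbar -> d' \in Kbar ->
      ~~ dart_adj (dart_map pi d) (dart_map pi d') -> AK d d' = 0)).
Proof.
move=> K Kbar AK.
have [[_ _ disjoint_dc _] [_ [pi_connect [vimg_inj vimg_E1]]]] := hminor.
have [_ A_nonadj] := hA; have [le_total _ le_anti] := hle.
split; first split.
- exact: dart_map_inj hG1 hG2 vimg_inj vimg_E1.
- exact: dart_map_Kbar vimg_E1.
split=> [d d' _ _|]; first exact: schur_pfN.
exact: (schur_pf_nonadjacent hG1 hG2 disjoint_dc pi_connect vimg_inj vimg_E1 le A_nonadj hAd).
Qed.
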